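(* Consider an $N$-player distributionally robust game (as defined in the context) with ambiguity set $$\mathcal{F} = \{ Q : Q[\mathbf{W}\cdot\mathrm{vec}(\tilde{\mathbf{P}})\le\mathbf{h}] = 1,\ \mathbb{E}_Q[\mathrm{vec}\,\tilde{\mathbf{P}}] = \mathbf{m},\ \mathbb{E}_Q[\|\mathrm{vec}(\tilde{\mathbf{P}})-\mathbf{m}\|_1]\le s\},$$ where $\{\mathbf{P}:\mathbf{W}\mathrm{vec}(\mathbf{P})\le\mathbf{h}\}$ is a bounded polyhedral set containing $\mathbf{m}$ (i.e. $\mathbf{W}\mathbf{m}\le\mathbf{h}$) and $s\ge0$, in which all players are risk neutral ($\varepsilon_i=1$ for all $i$). Then its set of Distributionally Robust Optimization Equilibria equals the set of Nash equilibria of the complete information game with fixed payoff matrix $\boldsymbol{\Psi}$, where $\mathrm{vec}(\boldsymbol{\Psi})=\mathbf{m}$.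
   Context: A finite $N$-player game: player $i$ has actions $\{1,\dots,a_i\}$ and mixed strategy set $S_{a_i} = \{\mathbf{x}^i\in\mathbb{R}^{a_i} : \mathbf{x}^i\ge 0,\ \sum_{j=1}^{a_i} x^i_j = 1\}$; $S=\prod_{i} S_{a_i}$. A payoff matrix $\mathbf{P}\in\mathbb{R}^{N\times\prod_{k=1}^N a_k}$ has entries $\mathbf{P}^i_{(j_1,\dots,j_N)}$, the payoff to player $i$ when each player $k$ plays action $j_k$. The expected payoff is $\pi_i(\mathbf{P};\mathbf{x}^1,\dots,\mathbf{x}^N) = \sum_{j_1=1}^{a_1}\cdots\sum_{j_N=1}^{a_N}\mathbf{P}^i_{(j_1,\dots,j_N)}\prod_{k=1}^N x^k_{j_k}$. Write $\mathbf{x}^{-i}$ for the strategies of all players except $i$, and $(\mathbf{x}^{-i},\mathbf{u}^i)$ for the profile with $\mathbf{x}^i$ replaced by $\mathbf{u}^i$. $\mathrm{vec}(\mathbf{A})$ is the column vector obtained by stacking the rows of $\mathbf{A}$. $\tilde{\mathbf{P}}$ denotes a random payoff matrix. For a loss random variable $L$ and $\varepsilon\in(0,1]$, $Q\text{-CVaR}_\varepsilon(L) = \min_{\zeta\in\mathbb{R}} \zeta + \frac{1}{\varepsilon}\mathbb{E}_Q[L-\zeta]^+$, with $[x]^+=\max\{x,0\}$. Distributionally robust game: commonly known ambiguity set $\mathcal{F}$ of distributions $Q$ of $\tilde{\mathbf{P}}$ and risk levels $\varepsilon_i\in(0,1]$. A profile $(\mathbf{x}^1,\dots,\mathbf{x}^N)\in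 S$ is a Distributionally Robust Optimization Equilibrium iff for every $i$, $\mathbf{x}^i\in\arg\min_{\mathbf{u}^i\in S_{a_i}}\sup_{Q\in\mathcal{F}} Q\text{-CVaR}_{\varepsilon_i}[-\pi_i(\tilde{\mathbf{P}};\mathbf{x}^{-i},\mathbf{u}^i)]$. A Nash equilibrium of the game with fixed payoff matrix $\check{\mathbf{P}}$ is a profile in $S$ with $\mathbf{x}^i\in\arg\max_{\mathbf{u}^i\in S_{a_i}}\pi_i(\check{\mathbf{P}};\mathbf{x}^{-i},\mathbf{u}^i)$ for every $i$. *)

From HB Require Import structures.
From mathcomp Require Import all_boot all_order all_algebra.
From mathcomp Require Import all_classical all_reals all_analysis.
Unset Printing Implicit Defensive.
Import Order.TTheory GRing.Theory Num.Theory.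
Local Open Scope classical_set_scope.
Local Open Scope ring_scope.

Section Game.
Context {R : realType} {N : nat} (a : 'I_N -> nat).

Definition profile := {dffun forall k : 'I_N, 'I_(a k)}.

Definition ncols := #|{: profile}|.

Definition vdim := (N * ncols)%N.

(* payoff matrices P in R^{N x prod_k a_k}; column of profile p is enum_rank p *)
Definition payoff_mx := 'M[R]_(N, ncols).

Definition simplex {n : nat} : set 'rV[R]_n :=
  [set u | (forall j, 0 <= u 0 j) /\ \sum_(j < n) u 0 j = 1].

Definition strat_profile := forall k : 'I_N, 'rV[R]_(a k).

Definition in_S (x : strat_profile) : Prop := forall k, simplex (x k).

Definition deviate (x : strat_profile) (i : 'I_N) (u : 'rV[R]_(a i))
  : strat_profile := @dfwith _ (fun k : 'I_N => 'rV[R]_(a k)) x i u.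

Definition exp_payoff (P : payoff_mx) (i : 'I_N) (x : strat_profile) : R :=
  \sum_(p : profile) P i (enum_rank p) * \prod_(k < N) x k 0 (p k).

(* vec(P) : rows of P stacked, as a column vector *)
Definition vec (P : payoff_mx) : 'cV[R]_vdim := (mxvec P)^T.

(* the random vector vec(P~) lives in R^vdim, modelled as vdim.-tuple R
   with the product Borel sigma-algebra *)
Definition sample := (vdim.-tuple R).

Definition col_of (v : sample) : 'cV[R]_vdim := \col_j tnth v j.

Definition mat_of (v : sample) : payoff_mx := vec_mx (col_of v)^T.

Definition CVaR (eps : R) (Q : probability sample R) (L : sample -> R)
  : \bar R :=
  ereal_inf [set ((zeta%:E + (eps^-1)%:E *
                   \int[Q]_v (Num.max (L v - zeta) 0)%:E)%E) | zeta in [set: R]].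

Definition worst_CVaR (F : set (probability sample R)) (eps : R)
  (L : sample -> R) : \bar R :=
  ereal_sup [set CVaR eps Q L | Q in F].

Definition DROE (F : set (probability sample R)) (eps : 'I_N -> R)
  (x : strat_profile) : Prop :=
  in_S x /\
  forall i : 'I_N,
    simplex (x i) /\
    forall u : 'rV[R]_(a i), simplex u ->
      (worst_CVaR F (eps i) (fun v => (- exp_payoff (mat_of v) i x)%R)
       <= worst_CVaR F (eps i) (fun v => (- exp_payoff (mat_of v) i (deviate x i u))%R))%E.

Definition Nash (P : payoff_mx) (x : strat_profile) : Prop :=
  in_S x /\
  forall i : 'I_N, forall u : 'rV[R]_(a i), simplex u ->
    exp_payoff P i (deviate x i u) <= exp_payoff P i x.

Definition polyhedron {K : nat} (W : 'M[R]_(K, vdim)) (h : 'cV[R]_K)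
  (c : 'cV[R]_vdim) : Prop := forall k, (W *m c) k 0 <= h k 0.

Definition bounded_polyhedron {K : nat} (W : 'M[R]_(K, vdim)) (h : 'cV[R]_K)
  : Prop := exists B : R, forall c, polyhedron W h c -> forall j, `|c j 0| <= B.

Definition ambiguity_set {K : nat} (W : 'M[R]_(K, vdim)) (h : 'cV[R]_K)
  (m : 'cV[R]_vdim) (s : R) : set (probability sample R) :=
  [set Q : probability sample R | Q [set v | polyhedron W h (col_of v)] = 1%E
        /\ (forall j : 'I_vdim,
              Q.-integrable [set: sample] (fun v => (tnth v j)%:E)
              /\ (\int[Q]_v (tnth v j)%:E = (m j 0)%:E)%E)
        /\ (\int[Q]_v (\sum_(j < vdim) `|tnth v j - m j 0|)%:E <= s%:E)%E].

End Game.

From HB Require Import structures.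
From mathcomp Require Import all_boot all_order all_algebra.
From mathcomp Require Import all_classical all_reals all_analysis.
From mathcomp Require Import measurable_realfun.
Import Order.TTheory GRing.Theory Num.Theory.
Local Open Scope ring_scope.

(* For risk level 1, CVaR is the expectation: zeta + E[L - zeta]^+ >= E[L] for
   every zeta, with equality when zeta is an almost sure lower bound of L; such
   a bound exists because the support polyhedron is bounded.  The loss
   -pi_i(P~; x) is linear in vec(P~), so its expectation under every Q in F is
   -pi_i(Psi; x).  As F contains the Dirac mass at m, the worst-case CVaR of
   every player is -pi_i(Psi; x), and the DROE conditions are literally the
   Nash conditions for Psi. *)

Section ShiftedPositivePart.
Context {d : measure_display} {T : measurableType d} {R : realType}.
Context {Q : probability T R} {L : T -> R} {e : R}.
Hypotheses (QL : Q.-integrable [set: T] (fun v => (L v)%:E))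
           (EL : (\int[Q]_v (L v)%:E = e%:E)%E).

Local Open Scope ereal_scope.

Let integrable_const (z : R) : Q.-integrable [set: T] (EFin \o cst z).
Proof. exact: finite_measure_integrable_cst. Qed.

Lemma integrable_subr_cst (z : R) :
  Q.-integrable [set: T] (fun v => (L v - z)%:E).
Proof. exact: (integrableB measurableT QL (integrable_const z)). Qed.

Lemma integral_subr_cst (z : R) : \int[Q]_v (L v - z)%:E = (e - z)%:E.
Proof.
under eq_integral do rewrite EFinB.
rewrite (integralB_EFin measurableT QL (integrable_const z)) EL.
rewrite (integral_cst Q measurableT z%:E) EFinB -[in RHS](mule1 z%:E).
by congr (_ - _ * _); exact: probability_setT.
Qed.

Lemma mean_le_shifted_positive_part (z : R) :
  e%:E <= z%:E + \int[Q]_v (Num.max (L v - z) 0)%:E.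
Proof.
have QLz := integrable_subr_cst z.
have QLz_pos : Q.-integrable [set: T] (fun v => (Num.max (L v - z) 0)%:E).
  apply: eq_integrable (integrable_funepos measurableT QLz) => // v _.
  by rewrite funeposE EFin_max.
rewrite -leeBlDl // -EFinB -integral_subr_cst.
by apply: le_integral => // v _; rewrite lee_fin le_max lexx.
Qed.

Lemma shifted_positive_part_at_lower_bound {A : set T} {b : R} :
  measurable A -> Q A = 1 -> (forall v, A v -> b <= L v)%R ->
  b%:E + \int[Q]_v (Num.max (L v - b) 0)%:E = e%:E.
Proof.
move=> mA QA bL.
have mLb : measurable_fun [set: T] (fun v => L v - b)%R.
  apply: measurable_funB => //; apply/measurable_EFinP.
  exact: measurable_int QL.
rewrite (@ae_eq_integral _ _ _ Q _ (fun v => (L v - b)%:E)) //.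
- by rewrite integral_subr_cst -EFinD addrC subrK.
- by apply/measurable_EFinP; apply: measurable_maxr.
- exact/measurable_EFinP.
- exists (~` A)%classic; split; first exact: measurableC.
    by move: (probability_setC Q mA); rewrite QA subee.
  move=> v /= nLv Av; apply: nLv => _.
  by rewrite (max_idPl _) // subr_ge0 bL.
Qed.

End ShiftedPositivePart.

Section LinearMoments.
Context {R : realType} {n : nat} {Q : probability (n.-tuple R) R} (mu : 'I_n -> R).
Hypothesis Q_mean : forall j, Q.-integrable [set: n.-tuple R] (fun v => (tnth v j)%:E)
  /\ (\int[Q]_v (tnth v j)%:E = (mu j)%:E)%E.
Context {I : finType} (f : I -> 'I_n) (c : I -> R).

Let integrable_term k :
  Q.-integrable [set: n.-tuple R] (fun v => (tnth v (f k) * c k)%:E).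
Proof. exact: (integrableZr measurableT (c k) (Q_mean (f k)).1). Qed.

Lemma integrable_tnth_comb :
  Q.-integrable [set: n.-tuple R] (fun v => (\sum_k tnth v (f k) * c k)%:E).
Proof.
under eq_fun do rewrite -sumEFin.
by apply: (integrable_sum measurableT) => k _; exact: integrable_term.
Qed.

Lemma integral_tnth_comb :
  (\int[Q]_v (\sum_k tnth v (f k) * c k)%:E = (\sum_k mu (f k) * c k)%:E)%E.
Proof.
under eq_integral do rewrite -sumEFin.
rewrite (integral_sum measurableT); last exact: integrable_term.
rewrite -sumEFin; apply: eq_bigr => k _.
under eq_integral do rewrite EFinM.
by rewrite (integralZr measurableT (Q_mean (f k)).1) (Q_mean (f k)).2.
Qed.

End LinearMoments.

Section DistributionallyRobustGame.
Context {R : realType} {N : nat} (a : 'I_N -> nat).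
Local Notation sample := (@sample R N a).
Local Open Scope classical_set_scope.

Lemma col_ofE (v : sample) j k : col_of a v j k = tnth v j.
Proof. by rewrite mxE. Qed.

Lemma CVaR1_eq_mean {Q : probability sample R} {L : sample -> R} {e : R}
    {A : set sample} (b : R) :
  Q.-integrable [set: sample] (fun v => (L v)%:E) -> (\int[Q]_v (L v)%:E = e%:E)%E ->
  measurable A -> Q A = 1%E -> (forall v, A v -> b <= L v) ->
  CVaR a 1 Q L = e%:E.
Proof.
move=> QL EL mA QA bL; rewrite /CVaR invr1.
apply/eqP; rewrite eq_le; apply/andP; split.
- apply: ge_ereal_inf; exists (b%:E + 1 * \int[Q]_v (Num.max (L v - b) 0)%:E)%E.
    by exists b.
  by rewrite mul1e (shifted_positive_part_at_lower_bound QL EL mA QA bL).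
- apply: le_ereal_inf_tmp => _ [z _ <-]; rewrite mul1e.
  exact: mean_le_shifted_positive_part QL EL z.
Qed.

Lemma measurable_polyhedron {K : nat} (W : 'M[R]_(K, vdim a)) (h : 'cV[R]_K) :
  measurable [set v : sample | polyhedron a W h (col_of a v)].
Proof.
have -> : [set v : sample | polyhedron a W h (col_of a v)] =
    \bigcap_(k in [set: 'I_K]) [set v | \sum_j W k j * tnth v j <= h k 0].
  apply/seteqP; split => v /= Wv k.
  - by move: (Wv k); rewrite mxE; under eq_bigr do rewrite col_ofE.
  - by move: (Wv k I); rewrite mxE; under eq_bigr do rewrite col_ofE.
apply: fin_bigcap_measurable => [|k _]; first exact: finite_finset.
rewrite -[X in measurable X]setTI; apply: measurable_fun_le => //.
by apply: measurable_sum => j; apply: measurable_funM => //; exact: measurable_tnth.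
Qed.

Lemma exp_payoff_vec_mx (w : 'cV[R]_(vdim a)) i (y : strat_profile a) :
  exp_payoff a (vec_mx w^T) i y =
  \sum_p w (mxvec_index i (enum_rank p)) 0 * \prod_k y k 0 (p k).
Proof. by apply: eq_bigr => p _; rewrite !mxE. Qed.

Context {K : nat} {W : 'M[R]_(K, vdim a)} {h : 'cV[R]_K} {m : 'cV[R]_(vdim a)}.
Context {s : R}.

Lemma CVaR1_payoff_loss (Q : probability sample R) i (y : strat_profile a) :
  bounded_polyhedron a W h -> ambiguity_set a W h m s Q ->
  CVaR a 1 Q (fun v => - exp_payoff a (mat_of a v) i y) =
  (- exp_payoff a (vec_mx m^T) i y)%:E.
Proof.
move=> [B WhB] [QWh [Q_mean _]].
pose f (p : profile a) : 'I_(vdim a) := mxvec_index i (enum_rank p).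
pose c (p : profile a) := - \prod_k y k 0 (p k).
have -> : (fun v => - exp_payoff a (mat_of a v) i y) =
          (fun v : sample => \sum_p tnth v (f p) * c p).
  apply/funext => v; rewrite exp_payoff_vec_mx -sumrN.
  by apply: eq_bigr => p _; rewrite col_ofE mulrN.
have -> : - exp_payoff a (vec_mx m^T) i y = \sum_p m (f p) 0 * c p.
  by rewrite exp_payoff_vec_mx -sumrN; apply: eq_bigr => p _; rewrite mulrN.
pose mu j : R := m j 0.
apply: (CVaR1_eq_mean (- \sum_p B * `|c p|) (integrable_tnth_comb mu Q_mean f c)
  (integral_tnth_comb mu Q_mean f c) (measurable_polyhedron W h) QWh).
move=> v /WhB Bv; rewrite -sumrN; apply: ler_sum => p _.
apply: lerNnormlW; rewrite normrM.
by apply: ler_wpM2r => //; move: (Bv (f p)); rewrite col_ofE.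
Qed.

Lemma dirac_mean_in_ambiguity_set :
  polyhedron a W h m -> 0 <= s ->
  ambiguity_set a W h m s \d_([tuple m j 0 | j < vdim a] : sample).
Proof.
set vm : sample := [tuple m j 0 | j < vdim a].
have vmE j : tnth vm j = m j 0 by rewrite tnth_mktuple.
have mtnth j : measurable_fun [set: sample] (fun v => (tnth v j)%:E).
  by apply/measurable_EFinP; exact: measurable_tnth.
move=> Whm s_ge0; split; [|split].
- have vm_in : polyhedron a W h (col_of a vm).
    rewrite (_ : col_of a vm = m) //.
    by apply/matrixP => j k; rewrite col_ofE vmE ord1.
  have := @diracE _ _ R vm [set v : sample | polyhedron a W h (col_of a v)].
  by rewrite mem_set.
- move=> j; split.
    apply/integrableP; split => //.
    by rewrite integral_dirac ?diracE ?mem_set ?mul1e ?ltey //; exact: measurableT_comp.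
  by rewrite integral_dirac // diracE mem_set // mul1e vmE.
- rewrite integral_dirac ?diracE ?mem_set ?mul1e ?lee_fin //.
    by rewrite big1 // => j _; rewrite vmE subrr normr0.
  apply/measurable_EFinP; apply: measurable_sum => j.
  by apply: measurableT_comp => //; apply: measurable_funB => //; exact: measurable_tnth.
Qed.

Lemma worst_CVaR1_payoff_loss i (y : strat_profile a) :
  bounded_polyhedron a W h -> polyhedron a W h m -> 0 <= s ->
  worst_CVaR a (ambiguity_set a W h m s) 1
    (fun v => - exp_payoff a (mat_of a v) i y) =
  (- exp_payoff a (vec_mx m^T) i y)%:E.
Proof.
move=> Wh_bounded Whm s_ge0; rewrite /worst_CVaR.
suff -> : [set CVaR a 1 Q (fun v => - exp_payoff a (mat_of a v) i y)
            | Q in ambiguity_set a W h m s] =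
          [set (- exp_payoff a (vec_mx m^T) i y)%:E] by exact: ereal_sup1.
apply/seteqP; split => [_ [Q FQ <-]|_ ->]; first by rewrite CVaR1_payoff_loss.
exists \d_([tuple m j 0 | j < vdim a] : sample).
  exact: dirac_mean_in_ambiguity_set.
exact: CVaR1_payoff_loss (dirac_mean_in_ambiguity_set Whm s_ge0).
Qed.

End DistributionallyRobustGame.

Theorem proposition1 (R : realType) (N : nat) (a : 'I_N -> nat) (K : nat)
  (W : 'M[R]_(K, vdim a)) (h : 'cV[R]_K) (m : 'cV[R]_(vdim a)) (s : R) :
  bounded_polyhedron a W h ->
  polyhedron a W h m ->
  0 <= s ->
  forall x : strat_profile a,
    DROE a (ambiguity_set a W h m s) (fun _ => 1) x <->
    Nash a (vec_mx m^T) x.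
Proof.
move=> Wh_bounded Whm s_ge0 x.
have worstE i y := worst_CVaR1_payoff_loss a i y Wh_bounded Whm s_ge0.
split=> [[xS DRx] | [xS Nx]]; split=> // i.
- by move=> u uS; have := (DRx i).2 u uS; rewrite !worstE lee_fin lerN2.
- by split=> [|u uS]; [exact: xS | rewrite !worstE lee_fin lerN2; exact: Nx].
Qed.
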